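(* Let $N\ge3$ and $p>p_S$. There exists $\underline\lambda>0$ such that for $0<\lambda<\underline\lambda$ problem (N) has no nonconstant regular solution. Moreover, there exists $\bar\lambda>0$ such that for $\lambda>\bar\lambda$ problem (N) has no radially decreasing regular solution.
   Context: $f(U):=-U+U^p$, $p_S:=\frac{N+2}{N-2}$. Problem (N): $U''+\frac{N-1}{r}U'+\lambda f(U)=0$ on $0<r<1$, $U'(1)=0$, $U>0$ on $[0,1]$, $\lambda>0$; a regular solution is $C^2$ on $[0,1]$ with $U'(0)=0$. *)

From Stdlib Require Import Reals Lra.
Open Scope R_scope.

Definition f (p U : R) : R := - U + Rpower U p.

Definition p_S (N : nat) : R := (INR N + 2) / (INR N - 2).

(* U is C^2 on [0,1]: first and second derivatives exist at every point of
   [0,1] and the second derivative is continuous there.  (U is a function on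
   R; any C^2 function on [0,1] extends to a C^2 function on R, so this is
   the usual notion.) *)
Definition C2_on_01 (U U1 U2 : R -> R) : Prop :=
  forall x, 0 <= x <= 1 ->
    derivable_pt_lim U x (U1 x) /\
    derivable_pt_lim U1 x (U2 x) /\
    continuity_pt U2 x.

Definition regular_solution (N : nat) (p lam : R) (U : R -> R) : Prop :=
  exists U1 U2 : R -> R,
    C2_on_01 U U1 U2 /\
    (forall r, 0 < r < 1 ->
        U2 r + (INR N - 1) / r * U1 r + lam * f p (U r) = 0) /\
    U1 1 = 0 /\ U1 0 = 0 /\
    (forall x, 0 <= x <= 1 -> 0 < U x).

Definition nonconstant_01 (U : R -> R) : Prop :=
  exists x y, 0 <= x <= 1 /\ 0 <= y <= 1 /\ U x <> U y.

Definition radially_decreasing (U : R -> R) : Prop :=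
  (forall x y, 0 <= x -> x <= y -> y <= 1 -> U y <= U x) /\ nonconstant_01 U.

(* Small lambda.  The energy [U'^2/2 + lam F(U)] decreases, so [U^(p-1)] is
   bounded by [max (U(0)^(p-1), (p+1)/2)].  If [lam U(0)^(p-1)] exceeded a fixed
   [eta], then [U] would stay close to [U(0) > 2] up to the radius [r0] where
   [lam r0^2 U(0)^(p-1) = eta]; the Emden-Fowler energy, nonincreasing because
   [p > p_S], is then so negative at [r0] that [U > 1] on [[r0, 1]], and the
   flux [r^(N-1) U'] would decrease strictly from a nonpositive value to
   [U'(1) = 0].  Hence [lam U(0)^(p-1) <= eta], so [lam f(U)] is Lipschitz in
   [U] around [1] with a small constant, and integrating the flux identity
   [(r^(N-1) U')' = - lam r^(N-1) f(U)] bounds the oscillation of [U] by a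
   fraction of itself: [U] is constant.

   Large lambda.  A Pohozaev identity gives [U(1) >= m0 > 0] for decreasing
   solutions.  Sturm comparison with [sin (sqrt (lam (p-1)) r)] shows that [U]
   drops to [1] near the centre, and comparison with
   [sin (sqrt (lam m0 min(1, p-1)) r)] shows that [1 - U], positive on the last
   interval of that length and with [U'(1) = 0], cannot exist there. *)

From Stdlib Require Import Reals Lra Lia.
Open Scope R_scope.

(** * Calculus on intervals *)

Lemma derivable_pt_lim_value f x a b :
  derivable_pt_lim f x a -> a = b -> derivable_pt_lim f x b.
Proof. now intros H <-. Qed.

(* The Stdlib combinators conclude about [(f + g)%F] etc.; these restatements
   about explicit lambdas let [apply] match goals built from [fun y => ...]. *)
Lemma derivable_pt_lim_fplus f g x a b :
  derivable_pt_lim f x a -> derivable_pt_lim g x b ->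
  derivable_pt_lim (fun y => f y + g y) x (a + b).
Proof. apply derivable_pt_lim_plus. Qed.

Lemma derivable_pt_lim_fminus f g x a b :
  derivable_pt_lim f x a -> derivable_pt_lim g x b ->
  derivable_pt_lim (fun y => f y - g y) x (a - b).
Proof. apply derivable_pt_lim_minus. Qed.

Lemma derivable_pt_lim_fmult f g x a b :
  derivable_pt_lim f x a -> derivable_pt_lim g x b ->
  derivable_pt_lim (fun y => f y * g y) x (a * g x + f x * b).
Proof. apply derivable_pt_lim_mult. Qed.

Lemma derivable_pt_lim_fopp f x a :
  derivable_pt_lim f x a -> derivable_pt_lim (fun y => - f y) x (- a).
Proof. apply derivable_pt_lim_opp. Qed.

Lemma derivable_pt_lim_fpow f x a n :
  derivable_pt_lim f x a ->
  derivable_pt_lim (fun y => f y ^ n) x (INR n * f x ^ pred n * a).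
Proof.
  intros H. apply (derivable_pt_lim_comp f (fun y => y ^ n)); auto.
  apply derivable_pt_lim_pow.
Qed.

Lemma derivable_pt_lim_fRpower f x a q :
  derivable_pt_lim f x a -> 0 < f x ->
  derivable_pt_lim (fun y => Rpower (f y) q) x (q * Rpower (f x) (q - 1) * a).
Proof.
  intros H Hf. apply (derivable_pt_lim_comp f (fun y => Rpower y q)); auto.
  now apply derivable_pt_lim_power.
Qed.

Lemma derivable_pt_lim_fsin f x a :
  derivable_pt_lim f x a -> derivable_pt_lim (fun y => sin (f y)) x (cos (f x) * a).
Proof. intros H. apply (derivable_pt_lim_comp f sin); auto. apply derivable_pt_lim_sin. Qed.

Lemma derivable_pt_lim_fcos f x a :
  derivable_pt_lim f x a -> derivable_pt_lim (fun y => cos (f y)) x (- sin (f x) * a).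
Proof. intros H. apply (derivable_pt_lim_comp f cos); auto. apply derivable_pt_lim_cos. Qed.

Ltac derive :=
  repeat first
    [ apply derivable_pt_lim_const | apply derivable_pt_lim_id | eassumption
    | apply derivable_pt_lim_fplus | apply derivable_pt_lim_fminus
    | apply derivable_pt_lim_fmult | apply derivable_pt_lim_fopp
    | apply derivable_pt_lim_fpow | apply derivable_pt_lim_fsin
    | apply derivable_pt_lim_fcos | apply derivable_pt_lim_fRpower ].

Lemma continuity_pt_of_derivable_pt_lim f x l :
  derivable_pt_lim f x l -> continuity_pt f x.
Proof. intros H. apply derivable_continuous_pt. now exists l. Qed.

Lemma MVT_open (G G' : R -> R) a b : a < b ->
  (forall c, a <= c <= b -> continuity_pt G c) ->
  (forall c, a < c < b -> derivable_pt_lim G c (G' c)) ->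
  exists c, a < c < b /\ G b - G a = G' c * (b - a).
Proof.
  intros Hab Hcont HD.
  assert (Hder : forall c, a < c < b -> derivable_pt G c)
    by (intros c Hc; exists (G' c); now apply HD).
  destruct (MVT G id a b Hder (fun c _ => derivable_pt_id c) Hab Hcont
              (fun c _ => derivable_continuous_pt id c (derivable_pt_id c)))
    as (c & Hc & E).
  exists c. split; [exact Hc|].
  rewrite derive_pt_id, (derive_pt_eq_0 G c (G' c) _ (HD c Hc)) in E.
  unfold id in E. lra.
Qed.

Lemma deriv_nonpos_antimono (G G' : R -> R) a b : a <= b ->
  (forall c, a <= c <= b -> continuity_pt G c) ->
  (forall c, a < c < b -> derivable_pt_lim G c (G' c)) ->
  (forall c, a < c < b -> G' c <= 0) -> G b <= G a.
Proof.
  intros [Hab| <-] Hcont HD Hsign; [|lra].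
  destruct (MVT_open G G' a b Hab Hcont HD) as (c & Hc & E).
  specialize (Hsign c Hc). nra.
Qed.

Lemma deriv_nonneg_mono (G G' : R -> R) a b : a <= b ->
  (forall c, a <= c <= b -> continuity_pt G c) ->
  (forall c, a < c < b -> derivable_pt_lim G c (G' c)) ->
  (forall c, a < c < b -> 0 <= G' c) -> G a <= G b.
Proof.
  intros [Hab| <-] Hcont HD Hsign; [|lra].
  destruct (MVT_open G G' a b Hab Hcont HD) as (c & Hc & E).
  specialize (Hsign c Hc). nra.
Qed.

Lemma deriv_neg_strict_antimono (G G' : R -> R) a b : a < b ->
  (forall c, a <= c <= b -> continuity_pt G c) ->
  (forall c, a < c < b -> derivable_pt_lim G c (G' c)) ->
  (forall c, a < c < b -> G' c < 0) -> G b < G a.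
Proof.
  intros Hab Hcont HD Hsign.
  destruct (MVT_open G G' a b Hab Hcont HD) as (c & Hc & E).
  specialize (Hsign c Hc). nra.
Qed.

Lemma eq_of_deriv_zero (G G' : R -> R) a b :
  (forall c, a <= c <= b -> derivable_pt_lim G c (G' c)) ->
  (forall c, a <= c <= b -> G' c = 0) ->
  forall x y, a <= x <= b -> a <= y <= b -> G x = G y.
Proof.
  intros HD HZ.
  assert (Hcont : forall c, a <= c <= b -> continuity_pt G c)
    by (intros c Hc; exact (continuity_pt_of_derivable_pt_lim _ _ _ (HD c Hc))).
  assert (K : forall x y, a <= x < y -> y <= b -> G x = G y).
  { intros x y Hxy Hy.
    destruct (MVT_open G G' x y) as (c & Hc & E); try lra.
    - intros c Hc; apply Hcont; lra.
    - intros c Hc; apply HD; lra.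
    - rewrite HZ in E by lra. lra. }
  intros x y Hx Hy. destruct (Rtotal_order x y) as [H|[->|H]].
  - apply K; lra.
  - reflexivity.
  - symmetry; apply K; lra.
Qed.

Lemma deriv_nonpos_of_antimono (G : R -> R) a b c l :
  (forall x y, a <= x -> x <= y -> y <= b -> G y <= G x) ->
  a <= c < b -> derivable_pt_lim G c l -> l <= 0.
Proof.
  intros Hanti Hc HD. destruct (Rle_or_lt l 0) as [|Hl]; auto. exfalso.
  destruct (HD l Hl) as [del Hdel]. pose proof (cond_pos del) as Hdel0.
  set (h := Rmin (del / 2) ((b - c) / 2)).
  assert (0 < h) by (apply Rmin_pos; lra).
  assert (h <= del / 2) by apply Rmin_l. assert (h <= (b - c) / 2) by apply Rmin_r.
  specialize (Hdel h ltac:(lra) ltac:(rewrite Rabs_right; lra)).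
  assert (G (c + h) <= G c) by (apply Hanti; lra).
  assert ((G (c + h) - G c) / h <= 0).
  { unfold Rdiv. assert (0 < / h) by (apply Rinv_0_lt_compat; lra). nra. }
  revert Hdel. apply Rle_not_lt. rewrite Rabs_left1 by lra. lra.
Qed.

Lemma Rabs_sub_le_of_deriv_bound (G G' : R -> R) a b K :
  (forall c, a <= c <= b -> derivable_pt_lim G c (G' c)) ->
  (forall c, a <= c <= b -> Rabs (G' c) <= K) ->
  forall x y, a <= x <= b -> a <= y <= b -> Rabs (G x - G y) <= K * Rabs (x - y).
Proof.
  intros HD HK.
  assert (Hxy : forall x y, a <= x < y -> y <= b -> Rabs (G y - G x) <= K * Rabs (y - x)).
  { intros x y Hx Hy.
    destruct (MVT_open G G' x y) as (c & Hc & ->); try lra.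
    - intros c Hc. apply (continuity_pt_of_derivable_pt_lim _ _ _ (HD c ltac:(lra))).
    - intros c Hc. apply HD; lra.
    - rewrite Rabs_mult. apply Rmult_le_compat_r; [apply Rabs_pos|apply HK; lra]. }
  intros x y Hx Hy. destruct (Rtotal_order x y) as [H|[->|H]].
  - rewrite Rabs_minus_sym, (Rabs_minus_sym x). apply Hxy; lra.
  - rewrite !Rminus_diag, Rabs_R0. lra.
  - apply Hxy; lra.
Qed.

Lemma lower_bound_of_deriv_lower_bound (G G' : R -> R) s :
  (forall c, 0 <= c <= 1 -> derivable_pt_lim G c (G' c)) ->
  (forall c, 0 <= c <= 1 -> - s * c <= G' c) ->
  forall r, 0 <= r <= 1 -> G 0 - s * r ^ 2 / 2 <= G r.
Proof.
  intros HD Hlow r Hr.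
  assert (HJ : forall c, 0 <= c <= 1 ->
            derivable_pt_lim (fun x => G x + s / 2 * x ^ 2) c (G' c + s * c)).
  { intros c Hc. pose proof (HD c Hc).
    eapply derivable_pt_lim_value; [derive|]. simpl. field. }
  assert (G 0 + s / 2 * 0 ^ 2 <= G r + s / 2 * r ^ 2).
  { apply (deriv_nonneg_mono (fun x => G x + s / 2 * x ^ 2) (fun x => G' x + s * x)); try lra.
    - intros c Hc. apply (continuity_pt_of_derivable_pt_lim _ _ _ (HJ c ltac:(lra))).
    - intros c Hc. apply HJ; lra.
    - intros c Hc. specialize (Hlow c ltac:(lra)). lra. }
  lra.
Qed.

Lemma pow_pred_r r n : (1 <= n)%nat -> r ^ n = r * r ^ pred n.
Proof. intros Hn. destruct n; [lia|reflexivity]. Qed.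

(** * Real numbers and real powers *)

Lemma Rlt_Rmin x a b : x < Rmin a b <-> x < a /\ x < b.
Proof. unfold Rmin. destruct (Rle_dec a b); split; intros; lra. Qed.

Lemma Rabs_le_between x K : Rabs x <= K -> - K <= x <= K.
Proof. unfold Rabs. destruct (Rcase_abs x); lra. Qed.

Lemma Rmult_nonpos_nonneg a b : a <= 0 -> 0 <= b -> a * b <= 0.
Proof. intros. nra. Qed.

Lemma Rmax_le_plus a b : 0 <= a -> 0 <= b -> Rmax a b <= a + b.
Proof. unfold Rmax. destruct (Rle_dec a b); lra. Qed.

Lemma Rpower_gt_0 x q : 0 < Rpower x q.
Proof. apply exp_pos. Qed.

Lemma Rpower_1_l q : Rpower 1 q = 1.
Proof. unfold Rpower. now rewrite ln_1, Rmult_0_r, exp_0. Qed.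

Lemma Rpower_2 x : 0 < x -> Rpower x 2 = x ^ 2.
Proof. intros. replace 2 with (INR 2) by (simpl; ring). now apply Rpower_pow. Qed.

Lemma Rpower_succ x q : 0 < x -> Rpower x (q + 1) = Rpower x q * x.
Proof. intros. now rewrite Rpower_plus, Rpower_1. Qed.

Lemma Rpower_pred x q : 0 < x -> Rpower x q = Rpower x (q - 1) * x.
Proof. intros. rewrite <- Rpower_succ by auto. f_equal; ring. Qed.

Lemma Rpower_le_1 x q : 0 < x <= 1 -> 0 <= q -> Rpower x q <= 1.
Proof.
  intros Hx Hq. rewrite <- (Rpower_1_l q). now apply Rle_Rpower_l.
Qed.

Lemma Rpower_ge_1 x q : 1 <= x -> 0 <= q -> 1 <= Rpower x q.
Proof. intros. rewrite <- (Rpower_1_l q). apply Rle_Rpower_l; lra. Qed.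

Lemma Rpower_gt_1 x q : 1 < x -> 0 < q -> 1 < Rpower x q.
Proof. intros. rewrite <- (Rpower_1_l q). apply Rlt_Rpower_l; lra. Qed.

Lemma Rpower_ge_1_neg x q : 0 < x <= 1 -> q <= 0 -> 1 <= Rpower x q.
Proof.
  intros Hx Hq. replace q with (- - q) by ring. rewrite Rpower_Ropp.
  rewrite <- Rinv_1. apply Rinv_le_contravar; [apply Rpower_gt_0|].
  apply Rpower_le_1; lra.
Qed.

Lemma Rpower_le_reg_l x y q : 0 < q -> 0 < x -> 0 < y ->
  Rpower x q <= Rpower y q -> x <= y.
Proof.
  intros Hq Hx Hy H. destruct (Rle_or_lt x y) as [|Hlt]; auto.
  assert (Rpower y q < Rpower x q) by (apply Rlt_Rpower_l; lra). lra.
Qed.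

Lemma Rpower_lt_reg_l x y q : 0 < q -> 0 < x -> 0 < y ->
  Rpower x q < Rpower y q -> x < y.
Proof.
  intros Hq Hx Hy H. destruct (Rlt_or_le x y) as [|Hle]; auto.
  assert (Rpower y q <= Rpower x q) by (apply Rle_Rpower_l; lra). lra.
Qed.

Lemma Rpower_MVT x y q : 0 < x < y ->
  exists z, x < z < y /\ Rpower y q - Rpower x q = q * Rpower z (q - 1) * (y - x).
Proof.
  intros Hxy.
  destruct (MVT_open (fun t => Rpower t q) (fun t => q * Rpower t (q - 1)) x y)
    as (z & Hz & E); try lra.
  - intros c Hc. eapply continuity_pt_of_derivable_pt_lim.
    apply derivable_pt_lim_power. lra.
  - intros c Hc. apply derivable_pt_lim_power. lra.
  - now exists z.
Qed.

Lemma Rpower_gt_of_root_lt x y k : 0 < k -> 0 < y ->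
  Rpower y (/ k) < x -> y < Rpower x k.
Proof.
  intros Hk Hy Hx.
  replace y with (Rpower (Rpower y (/ k)) k)
    by (rewrite Rpower_mult, Rinv_l, Rpower_1; lra).
  apply Rlt_Rpower_l; [lra|]. split; [apply Rpower_gt_0|exact Hx].
Qed.

Lemma Rlt_div_mul x y z : 0 < z -> x < y / z -> x * z < y.
Proof.
  intros Hz H. apply (Rmult_lt_compat_r z) in H; [|exact Hz].
  replace (y / z * z) with y in H by (field; lra). exact H.
Qed.

Lemma two_mul_lt_sqrt x c lam : 0 <= x -> 0 < c -> 4 * x ^ 2 / c < lam ->
  2 * x < sqrt (lam * c).
Proof.
  intros Hx Hc H. rewrite <- (sqrt_pow2 (2 * x)) by lra. apply sqrt_lt_1_alt.
  split; [apply pow2_ge_0|]. apply (Rmult_lt_compat_r c) in H; [|exact Hc].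
  replace (4 * x ^ 2 / c * c) with (4 * x ^ 2) in H by (field; lra). lra.
Qed.

(** * The nonlinearity *)

Section Nonlinearity.

Variable p : R.
Hypothesis Hp : 1 < p.

Lemma f_nonneg u : 1 <= u -> 0 <= f p u.
Proof.
  intros Hu. unfold f. rewrite (Rpower_pred u p) by lra.
  assert (1 <= Rpower u (p - 1)) by (apply Rpower_ge_1; lra). nra.
Qed.

Lemma f_pos u : 1 < u -> 0 < f p u.
Proof.
  intros Hu. unfold f. rewrite (Rpower_pred u p) by lra.
  assert (1 < Rpower u (p - 1)) by (apply Rpower_gt_1; lra). nra.
Qed.

Lemma f_nonpos u : 0 < u <= 1 -> f p u <= 0.
Proof.
  intros Hu. unfold f. rewrite (Rpower_pred u p) by lra.
  assert (Rpower u (p - 1) <= 1) by (apply Rpower_le_1; lra). nra.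
Qed.

Lemma f_ge_linear u : 1 <= u -> (p - 1) * (u - 1) <= f p u.
Proof.
  intros [Hu| <-]; [|unfold f; rewrite Rpower_1_l; nra].
  destruct (Rpower_MVT 1 u p) as (z & Hz & E); [lra|].
  rewrite Rpower_1_l in E.
  assert (1 <= Rpower z (p - 1)) by (apply Rpower_ge_1; lra).
  assert (p * 1 * (u - 1) <= p * Rpower z (p - 1) * (u - 1))
    by (apply Rmult_le_compat_r; [|apply Rmult_le_compat_l]; lra).
  unfold f. lra.
Qed.

Lemma f_le_linear u m : 0 < m <= u -> u <= 1 ->
  m * Rmin 1 (p - 1) * (1 - u) <= - f p u.
Proof.
  intros Hm Hu. set (th := Rmin 1 (p - 1)).
  assert (Hth : 0 < th <= 1 /\ th <= p - 1)
    by (unfold th; pose proof (Rmin_l 1 (p - 1)); pose proof (Rmin_r 1 (p - 1));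
        split; [split; [apply Rmin_pos|]|]; lra).
  (* for [p >= 2] since [u^(p-1) <= u], for [p < 2] by the mean value theorem *)
  assert (Hkey : th * (1 - u) <= 1 - Rpower u (p - 1)).
  { destruct (Rle_or_lt 2 p) as [Hp2|Hp2].
    - rewrite (Rpower_pred u (p - 1)) by lra.
      assert (Rpower u (p - 1 - 1) <= 1) by (apply Rpower_le_1; lra).
      pose proof (Rpower_gt_0 u (p - 1 - 1)). nra.
    - destruct Hu as [Hu| ->]; [|rewrite Rpower_1_l; lra].
      destruct (Rpower_MVT u 1 (p - 1)) as (z & Hz & E); [lra|].
      rewrite Rpower_1_l in E.
      assert (1 <= Rpower z (p - 1 - 1)) by (apply Rpower_ge_1_neg; lra).
      assert ((p - 1) * 1 * (1 - u) <= (p - 1) * Rpower z (p - 1 - 1) * (1 - u))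
        by (apply Rmult_le_compat_r; [|apply Rmult_le_compat_l]; lra).
      assert (th * (1 - u) <= (p - 1) * (1 - u)) by (apply Rmult_le_compat_r; lra).
      lra. }
  assert (m * (th * (1 - u)) <= u * (1 - Rpower u (p - 1)))
    by (apply Rmult_le_compat; try lra; apply Rmult_le_pos; lra).
  unfold f. rewrite (Rpower_pred u p) by lra. lra.
Qed.

Lemma Rabs_f_le u D : 0 < u -> 1 <= D -> Rpower u (p - 1) <= D ->
  Rabs (f p u) <= (1 + p * D) * Rabs (u - 1).
Proof.
  intros Hu HD Hb.
  assert (E : exists z, 0 < z /\ Rpower z (p - 1) <= D /\
            f p u = (u - 1) * (p * Rpower z (p - 1) - 1)).
  { destruct (Rtotal_order u 1) as [Hlt|[->|Hgt]].
    - destruct (Rpower_MVT u 1 p) as (z & Hz & E); [lra|].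
      exists z. rewrite Rpower_1_l in E. unfold f.
      assert (Rpower z (p - 1) <= 1) by (apply Rpower_le_1; lra).
      split; [lra|split; [lra|nra]].
    - exists 1. rewrite Rpower_1_l. unfold f. rewrite Rpower_1_l. split; lra.
    - destruct (Rpower_MVT 1 u p) as (z & Hz & E); [lra|].
      exists z. rewrite Rpower_1_l in E. unfold f.
      assert (Rpower z (p - 1) <= Rpower u (p - 1)) by (apply Rle_Rpower_l; lra).
      split; [lra|split; [lra|nra]]. }
  destruct E as (z & Hz & HzD & ->).
  pose proof (Rpower_gt_0 z (p - 1)).
  rewrite Rabs_mult, Rmult_comm. apply Rmult_le_compat_r; [apply Rabs_pos|].
  apply Rabs_le. split; nra.
Qed.

Definition F (u : R) : R := - u ^ 2 / 2 + Rpower u (p + 1) / (p + 1).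

(* [F u = u^2 (2 u^(p-1) - (p+1)) / (2 (p+1))], which is negative while
   [u^(p-1) < (p+1)/2] and increasing in [u] beyond that threshold. *)
Lemma Rpower_le_of_F_le u d : 0 < u -> 0 < d -> F u <= F d ->
  Rpower u (p - 1) <= Rmax (Rpower d (p - 1)) ((p + 1) / 2).
Proof.
  intros Hu Hd HF.
  destruct (Rle_or_lt (Rpower u (p - 1)) (Rmax (Rpower d (p - 1)) ((p + 1) / 2)))
    as [|Hc]; auto. exfalso.
  pose proof (Rle_lt_trans _ _ _ (Rmax_l _ _) Hc) as Hdu.
  pose proof (Rle_lt_trans _ _ _ (Rmax_r _ _) Hc) as Hthr.
  assert (d < u) by (apply (Rpower_lt_reg_l d u (p - 1)); lra).
  assert (Hsq : forall x, 0 < x -> F x = x ^ 2 * (2 * Rpower x (p - 1) - (p + 1)) / (2 * (p + 1))).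
  { intros x Hx. unfold F. replace (p + 1) with (p - 1 + 1 + 1) at 1 by ring.
    rewrite !Rpower_succ by lra. field. lra. }
  rewrite !Hsq in HF by lra.
  apply Rmult_le_reg_r in HF; [|apply Rinv_0_lt_compat; lra].
  set (a := Rpower u (p - 1)) in *. set (b := Rpower d (p - 1)) in *.
  pose proof (Rpower_gt_0 d (p - 1)).
  destruct (Rle_or_lt (2 * b) (p + 1)).
  - assert (0 < u ^ 2 * (2 * a - (p + 1))) by (apply Rmult_lt_0_compat; nra).
    assert (d ^ 2 * (2 * b - (p + 1)) <= 0) by (assert (0 <= d ^ 2) by nra; nra).
    lra.
  - assert (d ^ 2 < u ^ 2) by nra.
    assert (d ^ 2 * (2 * b - (p + 1)) < u ^ 2 * (2 * b - (p + 1))) by nra.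
    assert (u ^ 2 * (2 * b - (p + 1)) < u ^ 2 * (2 * a - (p + 1))) by nra.
    lra.
Qed.

End Nonlinearity.

(** * Emden-Fowler and Pohozaev constants *)

(* Emden-Fowler variables: with [v(t) = r^k U(r)], [t = ln r] and [k = 2/(p-1)],
   the radial equation becomes autonomous in [t] with damping coefficient
   [ef_alpha], which is positive exactly when [p > p_S]. *)
Definition ef_k (p : R) : R := 2 / (p - 1).
Definition ef_alpha (N : nat) (p : R) : R := INR N - 2 - 2 * ef_k p.
Definition ef_beta (N : nat) (p : R) : R := ef_k p * (INR N - 2 - ef_k p).

Definition ef_integrand (N : nat) (p X V t : R) : R :=
  (X + ef_k p * V) ^ 2 / 2 - (ef_beta N p + t) * V ^ 2 / 2
  + t * Rpower V (p + 1) / (p + 1).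

Lemma ef_k_pos p : 1 < p -> 0 < ef_k p.
Proof. intros. unfold ef_k. apply Rdiv_lt_0_compat; lra. Qed.

Lemma ef_beta_eq N p : ef_beta N p = ef_k p ^ 2 + ef_k p * ef_alpha N p.
Proof. unfold ef_beta, ef_alpha. ring. Qed.

Lemma INR_3_le N : (3 <= N)%nat -> 3 <= INR N.
Proof. intros. replace 3 with (INR 3) by (simpl; ring). now apply le_INR. Qed.

Lemma p_S_lt N p : (3 <= N)%nat -> p > p_S N -> INR N + 2 < p * (INR N - 2).
Proof.
  intros HN Hp. pose proof (INR_3_le N HN). unfold p_S in Hp.
  apply (Rmult_lt_compat_r (INR N - 2)) in Hp; [|lra].
  replace ((INR N + 2) / (INR N - 2) * (INR N - 2)) with (INR N + 2) in Hp
    by (field; lra). lra.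
Qed.

Lemma p_S_gt_1 N p : (3 <= N)%nat -> p > p_S N -> 1 < p.
Proof. intros HN Hp. pose proof (INR_3_le N HN). pose proof (p_S_lt N p HN Hp). nra. Qed.

Lemma ef_alpha_pos N p : (3 <= N)%nat -> p > p_S N -> 0 < ef_alpha N p.
Proof.
  intros HN Hp. pose proof (p_S_lt N p HN Hp). pose proof (p_S_gt_1 N p HN Hp).
  unfold ef_alpha, ef_k.
  apply (Rmult_lt_reg_r (p - 1)); [lra|].
  replace ((INR N - 2 - 2 * (2 / (p - 1))) * (p - 1)) with ((INR N - 2) * (p - 1) - 4)
    by (field; lra). lra.
Qed.

Lemma ef_integrand_bound N p X V t eta : 1 < p -> 0 < V ->
  - (2 * ef_k p * V) <= X <= 0 -> 0 <= t -> t * Rpower V (p - 1) <= eta ->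
  eta <= (p + 1) * ef_k p * ef_alpha N p / 4 ->
  ef_integrand N p X V t <= - (ef_k p * ef_alpha N p) * V ^ 2 / 4.
Proof.
  intros Hp HV HX Ht Htv Heta. unfold ef_integrand. rewrite ef_beta_eq.
  set (k := ef_k p) in *. set (a := ef_alpha N p) in *.
  assert (Hk : 0 < k) by apply ef_k_pos, Hp.
  assert (Hsq : (X + k * V) ^ 2 <= k ^ 2 * V ^ 2) by nra.
  assert (Hpow : t * Rpower V (p + 1) <= eta * V ^ 2).
  { replace (p + 1) with (p - 1 + 1 + 1) by ring. rewrite !Rpower_succ by lra.
    replace (t * (Rpower V (p - 1) * V * V)) with (t * Rpower V (p - 1) * V ^ 2) by ring.
    apply Rmult_le_compat_r; [nra|lra]. }
  assert (t * Rpower V (p + 1) / (p + 1) <= k * a / 4 * V ^ 2).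
  { apply (Rmult_le_reg_r (p + 1)); [lra|].
    replace (t * Rpower V (p + 1) / (p + 1) * (p + 1)) with (t * Rpower V (p + 1))
      by (field; lra).
    assert (eta * V ^ 2 <= (p + 1) * k * a / 4 * V ^ 2) by (apply Rmult_le_compat_r; nra).
    nra. }
  assert (0 <= t * V ^ 2) by nra.
  lra.
Qed.

Lemma ef_scaling p d t r : 1 < p -> 0 < d -> 0 < r -> 0 < t ->
  r ^ 2 = t / Rpower d (p - 1) -> Rpower r (2 * ef_k p) * d ^ 2 = Rpower t (ef_k p).
Proof.
  intros Hp Hd Hr Ht Hr2. pose proof (Rpower_gt_0 d (p - 1)).
  rewrite <- Rpower_mult, Rpower_2, Hr2 by lra.
  replace (d ^ 2) with (Rpower (Rpower d (p - 1)) (ef_k p)).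
  - rewrite Rpower_mult_distr by (try apply Rdiv_lt_0_compat; lra).
    f_equal. field. lra.
  - rewrite Rpower_mult, <- Rpower_2 by lra. f_equal. unfold ef_k. field. lra.
Qed.

Definition pohozaev_c (N : nat) (p : R) : R := (INR N - 2) / 2 - INR N / (p + 1).

(* The three bounds make the Pohozaev integrand nonnegative above any [m < m0]. *)
Definition m0 (N : nat) (p : R) : R :=
  Rmin (Rmin (2 * pohozaev_c N p / INR N) (2 / INR N)) (Rpower (2 / INR N) (/ (p - 1))).

Lemma pohozaev_c_pos N p : (3 <= N)%nat -> p > p_S N -> 0 < pohozaev_c N p.
Proof.
  intros HN Hp. pose proof (INR_3_le N HN). pose proof (p_S_lt N p HN Hp).
  pose proof (p_S_gt_1 N p HN Hp). unfold pohozaev_c.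
  apply (Rmult_lt_reg_r (2 * (p + 1))); [lra|].
  replace (((INR N - 2) / 2 - INR N / (p + 1)) * (2 * (p + 1)))
    with ((INR N - 2) * (p + 1) - 2 * INR N) by (field; lra).
  lra.
Qed.

Lemma m0_pos N p : (3 <= N)%nat -> p > p_S N -> 0 < m0 N p.
Proof.
  intros HN Hp. pose proof (INR_3_le N HN). pose proof (pohozaev_c_pos N p HN Hp).
  unfold m0. repeat apply Rmin_pos; try apply Rpower_gt_0; apply Rdiv_lt_0_compat; lra.
Qed.

Lemma mul_Rpower_le_Rmax p m u : 1 < p -> 0 < m <= u -> u <= 1 ->
  m * Rpower u (p - 1) <= Rmax m (Rpower m (p - 1)) * u.
Proof.
  intros Hp Hm Hu.
  destruct (Rle_or_lt 2 p) as [Hp2|Hp2].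
  - rewrite (Rpower_pred u (p - 1)) by lra.
    assert (Rpower u (p - 1 - 1) <= 1) by (apply Rpower_le_1; lra).
    pose proof (Rpower_gt_0 u (p - 1 - 1)).
    assert (Rpower u (p - 1 - 1) * u <= u) by nra.
    assert (m * (Rpower u (p - 1 - 1) * u) <= m * u) by (apply Rmult_le_compat_l; lra).
    assert (m * u <= Rmax m (Rpower m (p - 1)) * u)
      by (apply Rmult_le_compat_r; [lra|apply Rmax_l]).
    lra.
  - (* [m^(2-p) <= u^(2-p)] moves the power [p-1] from [u] to [m] *)
    assert (Hsplit : forall x, 0 < x -> x = Rpower x (p - 1) * Rpower x (2 - p)).
    { intros x Hx. rewrite <- Rpower_plus. replace (p - 1 + (2 - p)) with 1 by ring.
      now rewrite Rpower_1. }
    assert (Rpower m (2 - p) <= Rpower u (2 - p)) by (apply Rle_Rpower_l; lra).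
    pose proof (Rpower_gt_0 m (p - 1)). pose proof (Rpower_gt_0 u (p - 1)).
    assert (m * Rpower u (p - 1) <= Rpower m (p - 1) * u).
    { rewrite (Hsplit m) at 1 by lra. rewrite (Hsplit u) at 2 by lra.
      replace (Rpower m (p - 1) * Rpower m (2 - p) * Rpower u (p - 1))
        with (Rpower m (p - 1) * Rpower u (p - 1) * Rpower m (2 - p)) by ring.
      replace (Rpower m (p - 1) * (Rpower u (p - 1) * Rpower u (2 - p)))
        with (Rpower m (p - 1) * Rpower u (p - 1) * Rpower u (2 - p)) by ring.
      apply Rmult_le_compat_l; [nra|lra]. }
    assert (Rpower m (p - 1) * u <= Rmax m (Rpower m (p - 1)) * u)
      by (apply Rmult_le_compat_r; [lra|apply Rmax_r]).
    lra.
Qed.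

Lemma m0_spec N p m : (3 <= N)%nat -> p > p_S N -> 0 < m < m0 N p ->
  INR N * m / 2 <= pohozaev_c N p /\ INR N / 2 * Rmax m (Rpower m (p - 1)) <= 1.
Proof.
  intros HN HpS [Hm0 Hm]. pose proof (INR_3_le N HN). pose proof (p_S_gt_1 N p HN HpS).
  unfold m0 in Hm. apply Rlt_Rmin in Hm as [Hm Hm3]. apply Rlt_Rmin in Hm as [Hm1 Hm2].
  assert (Hmp : Rpower m (p - 1) < 2 / INR N).
  { assert (Hq : Rpower m (p - 1) < Rpower (Rpower (2 / INR N) (/ (p - 1))) (p - 1))
      by (apply Rlt_Rpower_l; lra).
    rewrite Rpower_mult, Rinv_l, Rpower_1 in Hq by (try apply Rdiv_lt_0_compat; lra).
    exact Hq. }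
  split.
  - apply (Rmult_lt_compat_r (INR N / 2)) in Hm1; [|apply Rdiv_lt_0_compat; lra].
    replace (2 * pohozaev_c N p / INR N * (INR N / 2)) with (pohozaev_c N p) in Hm1
      by (field; lra). lra.
  - unfold Rmax. destruct (Rle_dec m (Rpower m (p - 1))).
    + apply (Rmult_lt_compat_l (INR N / 2)) in Hmp; [|apply Rdiv_lt_0_compat; lra].
      replace (INR N / 2 * (2 / INR N)) with 1 in Hmp by (field; lra). lra.
    + apply (Rmult_lt_compat_l (INR N / 2)) in Hm2; [|apply Rdiv_lt_0_compat; lra].
      replace (INR N / 2 * (2 / INR N)) with 1 in Hm2 by (field; lra). lra.
Qed.

Lemma pohozaev_integrand_nonneg N p m u : (3 <= N)%nat -> p > p_S N ->
  0 < m < m0 N p -> m <= u ->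
  0 <= u ^ 2 + pohozaev_c N p * Rpower u (p + 1) - INR N * m / 2 * f p u - INR N * m ^ 2 / 2.
Proof.
  intros HN HpS Hm Hmu.
  destruct (m0_spec N p m HN HpS Hm) as [HAc HAmax].
  pose proof (INR_3_le N HN). pose proof (p_S_gt_1 N p HN HpS).
  pose proof (pohozaev_c_pos N p HN HpS). pose proof (Rpower_gt_0 u p).
  set (c := pohozaev_c N p) in *. set (A := INR N * m / 2) in *.
  assert (HApow : A * Rpower u p <= u ^ 2 + c * Rpower u (p + 1)).
  { rewrite (Rpower_succ u p) by lra.
    assert (0 <= c * (Rpower u p * u)) by (apply Rmult_le_pos; nra).
    destruct (Rle_or_lt 1 u) as [Hu1|Hu1].
    - assert (A * Rpower u p <= c * Rpower u p) by (apply Rmult_le_compat_r; lra).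
      assert (c * Rpower u p <= c * (Rpower u p * u)) by (apply Rmult_le_compat_l; nra).
      nra.
    - assert (A * Rpower u (p - 1) <= u).
      { pose proof (mul_Rpower_le_Rmax p m u ltac:(lra) ltac:(lra) ltac:(lra)).
        replace (A * Rpower u (p - 1)) with (INR N / 2 * (m * Rpower u (p - 1)))
          by (unfold A; field).
        assert (INR N / 2 * (m * Rpower u (p - 1)) <= INR N / 2 * (Rmax m (Rpower m (p - 1)) * u))
          by (apply Rmult_le_compat_l; lra).
        nra. }
      assert (A * Rpower u p <= u ^ 2) by (rewrite (Rpower_pred u p) by lra; nra).
      lra. }
  unfold f. replace (INR N * m ^ 2 / 2) with (A * m) by (unfold A; field).
  assert (0 <= A * (u - m)) by (apply Rmult_le_pos; unfold A; nra).
  lra.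
Qed.

(** * Radial solutions *)

Definition radial_solution (N : nat) (p lam : R) (U U1 U2 : R -> R) : Prop :=
  C2_on_01 U U1 U2 /\
  (forall r, 0 < r < 1 -> U2 r + (INR N - 1) / r * U1 r + lam * f p (U r) = 0) /\
  U1 1 = 0 /\ U1 0 = 0 /\
  (forall x, 0 <= x <= 1 -> 0 < U x).

Section RadialSolution.

Variables (N : nat) (p lam : R) (U U1 U2 : R -> R).
Hypothesis HN : (2 <= N)%nat.
Hypothesis Hp : 1 < p.
Hypothesis Hlam : 0 < lam.
Hypothesis Hsol : radial_solution N p lam U U1 U2.

Lemma U_derivable r : 0 <= r <= 1 -> derivable_pt_lim U r (U1 r).
Proof. intros Hr. apply (proj1 Hsol r Hr). Qed.

Lemma U1_derivable r : 0 <= r <= 1 -> derivable_pt_lim U1 r (U2 r).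
Proof. intros Hr. apply (proj1 Hsol r Hr). Qed.

Lemma U2_eq r : 0 < r < 1 -> U2 r = - ((INR N - 1) / r * U1 r) - lam * f p (U r).
Proof. intros Hr. pose proof (proj1 (proj2 Hsol) r Hr). lra. Qed.

Lemma U1_0 : U1 0 = 0.
Proof. apply Hsol. Qed.

Lemma U1_1 : U1 1 = 0.
Proof. apply Hsol. Qed.

Lemma U_pos r : 0 <= r <= 1 -> 0 < U r.
Proof. apply Hsol. Qed.

Lemma INR_N_ge_2 : 2 <= INR N.
Proof. replace 2 with (INR 2) by (simpl; ring). apply le_INR, HN. Qed.

Definition flux (r : R) : R := r ^ (N - 1) * U1 r.

Lemma flux_0 : flux 0 = 0.
Proof. unfold flux. rewrite U1_0. ring. Qed.

Lemma flux_1 : flux 1 = 0.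
Proof. unfold flux. rewrite U1_1. ring. Qed.

Lemma flux_continuous r : 0 <= r <= 1 -> continuity_pt flux r.
Proof.
  intros Hr. pose proof (U1_derivable r Hr).
  eapply continuity_pt_of_derivable_pt_lim. unfold flux. derive.
Qed.

Lemma flux_deriv r : 0 < r < 1 ->
  derivable_pt_lim flux r (- lam * r ^ (N - 1) * f p (U r)).
Proof.
  intros Hr. pose proof (U1_derivable r ltac:(lra)).
  eapply derivable_pt_lim_value; [unfold flux; derive|].
  cbv beta. rewrite U2_eq by lra.
  rewrite minus_INR, (pow_pred_r r (N - 1)) by lia. simpl INR. field. lra.
Qed.

Lemma flux_antimono a b : 0 <= a <= b -> b <= 1 ->
  (forall c, a < c < b -> 0 <= f p (U c)) -> flux b <= flux a.
Proof.
  intros Hab Hb Hf.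
  apply (deriv_nonpos_antimono flux (fun c => - lam * c ^ (N - 1) * f p (U c))); try lra.
  - intros c Hc. apply flux_continuous. lra.
  - intros c Hc. apply flux_deriv. lra.
  - intros c Hc. assert (0 < c ^ (N - 1)) by (apply pow_lt; lra).
    specialize (Hf c Hc). assert (0 <= lam * c ^ (N - 1) * f p (U c)) by
      (apply Rmult_le_pos; [apply Rmult_le_pos|]; lra). lra.
Qed.

Lemma flux_mono a b : 0 <= a <= b -> b <= 1 ->
  (forall c, a < c < b -> f p (U c) <= 0) -> flux a <= flux b.
Proof.
  intros Hab Hb Hf.
  apply (deriv_nonneg_mono flux (fun c => - lam * c ^ (N - 1) * f p (U c))); try lra.
  - intros c Hc. apply flux_continuous. lra.
  - intros c Hc. apply flux_deriv. lra.
  - intros c Hc. assert (0 < c ^ (N - 1)) by (apply pow_lt; lra).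
    specialize (Hf c Hc). assert (0 <= lam * c ^ (N - 1) * - f p (U c)) by
      (apply Rmult_le_pos; [apply Rmult_le_pos|]; lra). lra.
Qed.

Lemma flux_strict_antimono a b : 0 <= a < b -> b <= 1 ->
  (forall c, a < c < b -> 0 < f p (U c)) -> flux b < flux a.
Proof.
  intros Hab Hb Hf.
  apply (deriv_neg_strict_antimono flux (fun c => - lam * c ^ (N - 1) * f p (U c))); try lra.
  - intros c Hc. apply flux_continuous. lra.
  - intros c Hc. apply flux_deriv. lra.
  - intros c Hc. assert (0 < c ^ (N - 1)) by (apply pow_lt; lra).
    specialize (Hf c Hc). assert (0 < lam * c ^ (N - 1) * f p (U c)) by
      (apply Rmult_lt_0_compat; [apply Rmult_lt_0_compat|]; lra). lra.
Qed.

Lemma shifted_flux_continuous s r : 0 <= r <= 1 ->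
  continuity_pt (fun x => flux x + s * x ^ N) r.
Proof.
  intros Hr. pose proof (U1_derivable r Hr).
  eapply continuity_pt_of_derivable_pt_lim. unfold flux. derive.
Qed.

Lemma shifted_flux_deriv s r : 0 < r < 1 ->
  derivable_pt_lim (fun x => flux x + s * x ^ N) r
    (r ^ (N - 1) * (s * INR N - lam * f p (U r))).
Proof.
  intros Hr. pose proof (flux_deriv r Hr).
  eapply derivable_pt_lim_value; [derive|].
  replace (pred N) with (N - 1)%nat by lia. ring.
Qed.

Lemma U1_lower_bound M : (forall c, 0 < c < 1 -> lam * f p (U c) <= M) ->
  forall r, 0 <= r <= 1 -> - (M / INR N) * r <= U1 r.
Proof.
  intros HM r [[Hr|<-] Hr1]; [|rewrite U1_0; lra].
  pose proof INR_N_ge_2.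
  assert (Hshift : flux 0 + M / INR N * 0 ^ N <= flux r + M / INR N * r ^ N).
  { apply (deriv_nonneg_mono (fun x => flux x + M / INR N * x ^ N)
             (fun c => c ^ (N - 1) * (M / INR N * INR N - lam * f p (U c))) 0 r); try lra.
    - intros c Hc. apply shifted_flux_continuous. lra.
    - intros c Hc. apply shifted_flux_deriv. lra.
    - intros c Hc. assert (0 < c ^ (N - 1)) by (apply pow_lt; lra).
      specialize (HM c ltac:(lra)). replace (M / INR N * INR N) with M by (field; lra).
      apply Rmult_le_pos; lra. }
  rewrite flux_0, pow_i, (pow_pred_r r N) in Hshift by lia. unfold flux in Hshift.
  replace (pred N) with (N - 1)%nat in Hshift by lia.
  assert (0 < r ^ (N - 1)) by (apply pow_lt; lra).
  apply (Rmult_le_reg_l (r ^ (N - 1))); nra.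
Qed.

Lemma U1_upper_bound M : (forall c, 0 < c < 1 -> - M <= lam * f p (U c)) ->
  forall r, 0 <= r <= 1 -> U1 r <= M / INR N * r.
Proof.
  intros HM r [[Hr|<-] Hr1]; [|rewrite U1_0; lra].
  pose proof INR_N_ge_2.
  assert (Hshift : flux r + - (M / INR N) * r ^ N <= flux 0 + - (M / INR N) * 0 ^ N).
  { apply (deriv_nonpos_antimono (fun x => flux x + - (M / INR N) * x ^ N)
             (fun c => c ^ (N - 1) * (- (M / INR N) * INR N - lam * f p (U c))) 0 r);
      try lra.
    - intros c Hc. apply shifted_flux_continuous. lra.
    - intros c Hc. apply shifted_flux_deriv. lra.
    - intros c Hc. assert (0 < c ^ (N - 1)) by (apply pow_lt; lra).
      specialize (HM c ltac:(lra)). replace (- (M / INR N) * INR N) with (- M) by (field; lra).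
      assert (0 <= c ^ (N - 1) * (M + lam * f p (U c))) by (apply Rmult_le_pos; lra).
      lra. }
  rewrite flux_0, pow_i, (pow_pred_r r N) in Hshift by lia. unfold flux in Hshift.
  replace (pred N) with (N - 1)%nat in Hshift by lia.
  assert (0 < r ^ (N - 1)) by (apply pow_lt; lra).
  apply (Rmult_le_reg_l (r ^ (N - 1))); nra.
Qed.

Lemma U1_zero_of_f_sign :
  (forall c, 0 < c < 1 -> 0 <= f p (U c)) \/ (forall c, 0 < c < 1 -> f p (U c) <= 0) ->
  forall r, 0 <= r <= 1 -> U1 r = 0.
Proof.
  intros Hsign r [[Hr|<-] Hr1]; [|apply U1_0].
  assert (Hflux : flux r = 0).
  { pose proof flux_0. pose proof flux_1.
    destruct Hsign as [Hf|Hf].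
    - assert (flux r <= flux 0) by (apply flux_antimono; try lra; intros c Hc; apply Hf; lra).
      assert (flux 1 <= flux r) by (apply flux_antimono; try lra; intros c Hc; apply Hf; lra). lra.
    - assert (flux 0 <= flux r) by (apply flux_mono; try lra; intros c Hc; apply Hf; lra).
      assert (flux r <= flux 1) by (apply flux_mono; try lra; intros c Hc; apply Hf; lra). lra. }
  unfold flux in Hflux. assert (0 < r ^ (N - 1)) by (apply pow_lt; lra).
  apply (Rmult_eq_reg_l (r ^ (N - 1))); lra.
Qed.

Lemma nonconstant_straddles_1 : nonconstant_01 U ->
  (exists x, 0 <= x <= 1 /\ U x < 1) /\ (exists y, 0 <= y <= 1 /\ 1 < U y).
Proof.
  intros (x0 & y0 & Hx0 & Hy0 & Hne).
  assert (Hconst : (forall c, 0 < c < 1 -> 0 <= f p (U c)) \/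
                   (forall c, 0 < c < 1 -> f p (U c) <= 0) -> False).
  { intros Hsign. apply Hne.
    apply (eq_of_deriv_zero U U1 0 1); auto.
    - exact U_derivable.
    - exact (U1_zero_of_f_sign Hsign). }
  split.
  - destruct (Classical_Prop.classic (exists x, 0 <= x <= 1 /\ U x < 1)) as [|Hno]; auto.
    exfalso. apply Hconst. left. intros c Hc. apply f_nonneg; auto.
    apply Rnot_lt_le. intros Hlt. apply Hno. exists c. split; [lra|exact Hlt].
  - destruct (Classical_Prop.classic (exists y, 0 <= y <= 1 /\ 1 < U y)) as [|Hno]; auto.
    exfalso. apply Hconst. right. intros c Hc. apply f_nonpos; auto.
    split; [apply U_pos; lra|]. apply Rnot_lt_le. intros Hlt. apply Hno.
    exists c. split; [lra|exact Hlt].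
Qed.

Lemma F_U_le_F_U0 r : 0 <= r <= 1 -> F p (U r) <= F p (U 0).
Proof.
  intros Hr. pose proof INR_N_ge_2.
  set (E := fun x => U1 x ^ 2 / 2 + lam * (- U x ^ 2 / 2 + Rpower (U x) (p + 1) / (p + 1))).
  assert (HE : forall c, 0 <= c <= 1 ->
            derivable_pt_lim E c (U1 c * U2 c + lam * f p (U c) * U1 c)).
  { intros c Hc. pose proof (U_derivable c Hc). pose proof (U1_derivable c Hc).
    pose proof (U_pos c Hc). unfold E, f.
    eapply derivable_pt_lim_value; [derive; lra|].
    replace (p + 1 - 1) with p by ring. simpl. field. lra. }
  assert (HEr : E r <= E 0).
  { apply (deriv_nonpos_antimono E (fun c => U1 c * U2 c + lam * f p (U c) * U1 c)); try lra.
    - intros c Hc. exact (continuity_pt_of_derivable_pt_lim _ _ _ (HE c ltac:(lra))).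
    - intros c Hc. apply HE. lra.
    - intros c Hc. rewrite U2_eq by lra.
      assert (0 <= U1 c ^ 2 * ((INR N - 1) / c))
        by (apply Rmult_le_pos; [nra|apply Rlt_le, Rdiv_lt_0_compat; lra]).
      nra. }
  unfold E in HEr. cbv beta in HEr. rewrite U1_0 in HEr. unfold F.
  assert (0 <= U1 r ^ 2 / 2) by nra.
  apply (Rmult_le_reg_l lam); nra.
Qed.

Lemma U_pow_bound r : 0 <= r <= 1 ->
  Rpower (U r) (p - 1) <= Rmax (Rpower (U 0) (p - 1)) ((p + 1) / 2).
Proof.
  intros Hr. apply Rpower_le_of_F_le; auto.
  - apply U_pos; lra.
  - apply U_pos; lra.
  - now apply F_U_le_F_U0.
Qed.

Lemma U1_abs_bound K : (forall c, 0 < c < 1 -> Rabs (lam * f p (U c)) <= K) ->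
  forall r, 0 <= r <= 1 -> Rabs (U1 r) <= K / INR N * r.
Proof.
  intros HK r Hr. apply Rabs_le. split.
  - replace (- (K / INR N * r)) with (- (K / INR N) * r) by ring.
    apply U1_lower_bound; auto. intros c Hc. specialize (HK c Hc).
    apply Rabs_le_between in HK. lra.
  - apply U1_upper_bound; auto. intros c Hc. specialize (HK c Hc).
    apply Rabs_le_between in HK. lra.
Qed.

(* The oscillation [Del] of [U] controls [|lam f(U)| <= lam (1 + p Dm) Del]
   (as [U] crosses 1), hence [|U'| <= lam (1 + p Dm) Del / N], and integrating
   over [0,1] gives back [Del <= lam (1 + p Dm) Del / N]. *)
Lemma nonconstant_lambda_lower_bound : nonconstant_01 U ->
  INR N <= lam * (1 + p * Rmax (Rpower (U 0) (p - 1)) ((p + 1) / 2)).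
Proof.
  intros Hnc. pose proof INR_N_ge_2.
  set (Dm := Rmax (Rpower (U 0) (p - 1)) ((p + 1) / 2)).
  assert (HDm : 1 <= Dm) by (unfold Dm; eapply Rle_trans; [|apply Rmax_r]; lra).
  assert (Hcont : forall c, 0 <= c <= 1 -> continuity_pt U c)
    by (intros c Hc; exact (continuity_pt_of_derivable_pt_lim _ _ _ (U_derivable c Hc))).
  destruct (continuity_ab_maj U 0 1 ltac:(lra) Hcont) as (xM & HM & HxM).
  destruct (continuity_ab_min U 0 1 ltac:(lra) Hcont) as (xm & Hm & Hxm).
  destruct (nonconstant_straddles_1 Hnc) as [(x & Hx & Hlt) (y & Hy & Hgt)].
  pose proof (Hm x Hx). pose proof (HM y Hy).
  set (Del := U xM - U xm).
  set (C := lam * (1 + p * Dm) * Del).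
  assert (Hf : forall c, 0 < c < 1 -> Rabs (lam * f p (U c)) <= C).
  { intros c Hc. rewrite Rabs_mult, (Rabs_right lam) by lra. unfold C.
    rewrite Rmult_assoc. apply Rmult_le_compat_l; [lra|].
    eapply Rle_trans.
    - apply (Rabs_f_le p Hp (U c) Dm); auto; [apply U_pos|apply U_pow_bound]; lra.
    - apply Rmult_le_compat_l; [nra|]. unfold Del. apply Rabs_le.
      specialize (HM c ltac:(lra)). specialize (Hm c ltac:(lra)). lra. }
  assert (HC : 0 <= C) by (apply Rmult_le_pos; [apply Rmult_le_pos|unfold Del]; nra).
  assert (Hosc : Del <= C / INR N).
  { assert (0 <= C / INR N) by (apply Rmult_le_pos; [lra|apply Rlt_le, Rinv_0_lt_compat; lra]).
    eapply Rle_trans; [apply Rle_abs|].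
    eapply Rle_trans; [apply (Rabs_sub_le_of_deriv_bound U U1 0 1 (C / INR N)); auto|].
    - exact U_derivable.
    - intros c Hc. eapply Rle_trans; [apply U1_abs_bound; eauto|]. nra.
    - assert (Rabs (xM - xm) <= 1) by (apply Rabs_le; lra). nra. }
  unfold C in Hosc.
  apply (Rmult_le_compat_r (INR N)) in Hosc; [|lra].
  replace (lam * (1 + p * Dm) * Del / INR N * INR N) with (lam * (1 + p * Dm) * Del)
    in Hosc by (field; lra).
  assert (0 < Del) by (unfold Del; lra). nra.
Qed.

Definition ef_energy (r : R) : R :=
  Rpower r (2 * ef_k p) * ef_integrand N p (r * U1 r) (U r) (lam * r ^ 2).

Lemma ef_energy_derivable r : 0 < r <= 1 ->
  exists l, derivable_pt_lim ef_energy r l.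
Proof.
  intros Hr. pose proof (U_derivable r ltac:(lra)). pose proof (U1_derivable r ltac:(lra)).
  pose proof (U_pos r ltac:(lra)).
  eexists. unfold ef_energy, ef_integrand. derive; lra.
Qed.

Lemma ef_energy_deriv r : 0 < r < 1 ->
  derivable_pt_lim ef_energy r (Rpower r (2 * ef_k p - 1) *
    (- ef_alpha N p * (r * U1 r + ef_k p * U r) ^ 2 - lam * r ^ 2 * U r ^ 2)).
Proof.
  intros Hr. pose proof (U_derivable r ltac:(lra)). pose proof (U1_derivable r ltac:(lra)).
  pose proof (U_pos r ltac:(lra)).
  eapply derivable_pt_lim_value; [unfold ef_energy, ef_integrand; derive; lra|].
  cbv beta. rewrite U2_eq by lra. unfold f.
  replace (p + 1 - 1) with p by ring.
  rewrite (Rpower_pred r (2 * ef_k p)), (Rpower_succ (U r) p) by lra.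
  unfold ef_beta, ef_alpha, ef_k. field. lra.
Qed.

Lemma ef_energy_antimono a b : 0 <= ef_alpha N p -> 0 < a <= b -> b <= 1 ->
  ef_energy b <= ef_energy a.
Proof.
  intros Ha Hab Hb.
  apply (deriv_nonpos_antimono ef_energy (fun c => Rpower c (2 * ef_k p - 1) *
    (- ef_alpha N p * (c * U1 c + ef_k p * U c) ^ 2 - lam * c ^ 2 * U c ^ 2))); try lra.
  - intros c Hc. destruct (ef_energy_derivable c ltac:(lra)) as [l Hl].
    exact (continuity_pt_of_derivable_pt_lim _ _ _ Hl).
  - intros c Hc. apply ef_energy_deriv. lra.
  - intros c Hc. pose proof (Rpower_gt_0 c (2 * ef_k p - 1)).
    assert (0 <= ef_alpha N p * (c * U1 c + ef_k p * U c) ^ 2)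
      by (apply Rmult_le_pos; [lra|apply pow2_ge_0]).
    assert (0 <= lam * c ^ 2 * U c ^ 2)
      by (apply Rmult_le_pos; [apply Rmult_le_pos; [lra|apply pow2_ge_0]|apply pow2_ge_0]).
    rewrite <- (Rmult_0_r (Rpower c (2 * ef_k p - 1))). apply Rmult_le_compat_l; lra.
Qed.

Lemma ef_energy_lower_bound r : 0 <= ef_alpha N p -> lam <= 1 -> 0 < r <= 1 ->
  - ((ef_beta N p + 1) * U r ^ 2 / 2) <= ef_energy r.
Proof.
  intros Ha Hl Hr. unfold ef_energy, ef_integrand.
  pose proof (ef_k_pos p Hp). pose proof (U_pos r ltac:(lra)).
  assert (Hbeta : 0 <= ef_beta N p)
    by (rewrite ef_beta_eq; assert (0 <= ef_k p * ef_alpha N p) by nra; nra).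
  assert (Hr2k : 0 < Rpower r (2 * ef_k p) <= 1)
    by (split; [apply Rpower_gt_0|apply Rpower_le_1; lra]).
  assert (0 <= lam * r ^ 2 * Rpower (U r) (p + 1) / (p + 1)).
  { apply Rmult_le_pos; [|apply Rlt_le, Rinv_0_lt_compat; lra].
    pose proof (Rpower_gt_0 (U r) (p + 1)).
    apply Rmult_le_pos; [apply Rmult_le_pos; [lra|apply pow2_ge_0]|lra]. }
  assert (0 <= (r * U1 r + ef_k p * U r) ^ 2) by apply pow2_ge_0.
  assert (lam * r ^ 2 <= 1) by (assert (r ^ 2 <= 1) by nra; nra).
  set (Q := (r * U1 r + ef_k p * U r) ^ 2 / 2 - (ef_beta N p + lam * r ^ 2) * U r ^ 2 / 2
            + lam * r ^ 2 * Rpower (U r) (p + 1) / (p + 1)).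
  assert (HQ : - ((ef_beta N p + 1) * U r ^ 2 / 2) <= Q).
  { unfold Q. assert ((ef_beta N p + lam * r ^ 2) * U r ^ 2 <= (ef_beta N p + 1) * U r ^ 2)
      by (apply Rmult_le_compat_r; [apply pow2_ge_0|lra]). lra. }
  assert (0 <= (ef_beta N p + 1) * U r ^ 2 / 2)
    by (assert (0 <= U r ^ 2) by apply pow2_ge_0; nra).
  destruct (Rle_or_lt 0 Q); nra.
Qed.

Lemma U_gt_1_of_ef_energy r0 : 0 <= ef_alpha N p -> lam <= 1 -> 0 < r0 <= 1 ->
  ef_energy r0 < - ((ef_beta N p + 1) / 2) -> forall r, r0 <= r <= 1 -> 1 < U r.
Proof.
  intros Ha Hl Hr0 HP r Hr.
  pose proof (ef_energy_lower_bound r Ha Hl ltac:(lra)).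
  pose proof (ef_energy_antimono r0 r Ha ltac:(lra) ltac:(lra)).
  pose proof (U_pos r ltac:(lra)).
  assert (Hbeta : 0 <= ef_beta N p).
  { rewrite ef_beta_eq. pose proof (ef_k_pos p Hp).
    assert (0 <= ef_k p * ef_alpha N p) by nra. nra. }
  assert (1 < U r ^ 2).
  { apply (Rmult_lt_reg_l ((ef_beta N p + 1) / 2)); lra. }
  nra.
Qed.

Lemma U_not_gt_1_up_to_boundary r0 : 0 <= r0 < 1 -> U1 r0 <= 0 ->
  ~ (forall r, r0 <= r <= 1 -> 1 < U r).
Proof.
  intros Hr0 HU1 Hgt.
  assert (flux 1 < flux r0)
    by (apply flux_strict_antimono; try lra; intros c Hc; apply f_pos; auto; apply Hgt; lra).
  rewrite flux_1 in H. unfold flux in H.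
  assert (0 <= r0 ^ (N - 1)) by (apply pow_le; lra). nra.
Qed.

Lemma U1_nonpos_of_ge_1 b : 0 <= b <= 1 -> (forall c, 0 < c < b -> 1 <= U c) -> U1 b <= 0.
Proof.
  intros Hb Hge. destruct (proj1 Hb) as [Hb0| <-]; [|rewrite U1_0; lra].
  assert (flux b <= flux 0)
    by (apply flux_antimono; try lra; intros c Hc; apply f_nonneg; auto; apply Hge; lra).
  rewrite flux_0 in H. unfold flux in H.
  assert (0 < b ^ (N - 1)) by (apply pow_lt; lra). nra.
Qed.

Lemma U_le_U0 : (p + 1) / 2 <= Rpower (U 0) (p - 1) -> forall r, 0 <= r <= 1 -> U r <= U 0.
Proof.
  intros Hd r Hr. apply (Rpower_le_reg_l _ _ (p - 1)); try lra.
  - apply U_pos; lra.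
  - apply U_pos; lra.
  - rewrite <- (Rmax_left (Rpower (U 0) (p - 1)) ((p + 1) / 2)) by lra.
    now apply U_pow_bound.
Qed.

Lemma U1_ge_center : (p + 1) / 2 <= Rpower (U 0) (p - 1) ->
  forall r, 0 <= r <= 1 -> - (lam * Rpower (U 0) (p - 1) * U 0 / INR N) * r <= U1 r.
Proof.
  intros Hd. apply U1_lower_bound. intros c Hc. unfold f.
  replace (lam * Rpower (U 0) (p - 1) * U 0) with (lam * Rpower (U 0) p)
    by (rewrite (Rpower_pred (U 0) p) by (apply U_pos; lra); ring).
  assert (Rpower (U c) p <= Rpower (U 0) p).
  { apply Rle_Rpower_l; [lra|]. split; [apply U_pos; lra|]. apply U_le_U0; auto. lra. }
  pose proof (U_pos c ltac:(lra)). nra.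
Qed.

Lemma U_ge_center : (p + 1) / 2 <= Rpower (U 0) (p - 1) ->
  forall r, 0 <= r <= 1 -> U 0 * (1 - lam * Rpower (U 0) (p - 1) * r ^ 2 / (2 * INR N)) <= U r.
Proof.
  intros Hd r Hr. pose proof INR_N_ge_2.
  eapply Rle_trans;
    [|apply (lower_bound_of_deriv_lower_bound U U1 (lam * Rpower (U 0) (p - 1) * U 0 / INR N));
      eauto].
  - right. field. lra.
  - exact U_derivable.
  - intros c Hc. now apply U1_ge_center.
Qed.

Lemma ef_energy_le_at r0 eta : 0 <= ef_alpha N p -> 0 < r0 < 1 ->
  (p + 1) / 2 <= Rpower (U 0) (p - 1) -> lam * r0 ^ 2 * Rpower (U 0) (p - 1) = eta ->
  eta <= (p + 1) * ef_k p * ef_alpha N p / 4 ->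
  U 0 / 2 <= U r0 -> - (2 * ef_k p * U r0) <= r0 * U1 r0 <= 0 ->
  ef_energy r0 <= - (ef_k p * ef_alpha N p / 16) * Rpower (eta / lam) (ef_k p).
Proof.
  intros Ha Hr0 HDp Heta Heka Hhalf HX. pose proof (ef_k_pos p Hp).
  set (k := ef_k p) in *. set (d := U 0) in *. set (V := U r0) in *.
  set (D := Rpower d (p - 1)) in *.
  assert (Hd : 0 < d) by (apply U_pos; lra).
  assert (HV : V <= d) by (apply U_le_U0; [exact HDp|lra]).
  assert (HZ : ef_integrand N p (r0 * U1 r0) V (lam * r0 ^ 2) <= - (k * ef_alpha N p) * V ^ 2 / 4).
  { apply (ef_integrand_bound N p _ V _ eta); auto; try lra.
    - apply Rmult_le_pos; [lra|apply pow2_ge_0].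
    - rewrite <- Heta. apply Rmult_le_compat_l; [apply Rmult_le_pos; [lra|apply pow2_ge_0]|].
      apply Rle_Rpower_l; lra. }
  assert (HRk : Rpower r0 (2 * k) * d ^ 2 = Rpower (eta / lam) k).
  { assert (0 < D) by apply Rpower_gt_0.
    apply ef_scaling; try lra.
    - apply Rdiv_lt_0_compat; [|lra]. rewrite <- Heta.
      apply Rmult_lt_0_compat; [apply Rmult_lt_0_compat; [lra|apply pow_lt]|]; lra.
    - rewrite <- Heta. fold D. field. lra. }
  unfold ef_energy. fold k V. rewrite <- HRk.
  pose proof (Rpower_gt_0 r0 (2 * k)).
  assert (0 <= k * ef_alpha N p) by (apply Rmult_le_pos; lra).
  assert (k * ef_alpha N p * (d ^ 2 / 4) <= k * ef_alpha N p * V ^ 2)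
    by (apply Rmult_le_compat_l; nra).
  nra.
Qed.

Lemma center_value_bound eta : 0 <= ef_alpha N p -> 0 < eta ->
  eta <= INR N -> eta <= INR N * ef_k p -> eta <= (p + 1) * ef_k p * ef_alpha N p / 4 ->
  lam <= 1 -> lam * Rpower 2 (p - 1) <= eta -> lam * ((p + 1) / 2) <= eta ->
  (ef_beta N p + 1) / 2 < ef_k p * ef_alpha N p / 16 * Rpower (eta / lam) (ef_k p) ->
  lam * Rpower (U 0) (p - 1) <= eta.
Proof.
  intros Ha He HeN HeNk Heka Hl1 Hl2 Hlp Hbig.
  destruct (Rle_or_lt (lam * Rpower (U 0) (p - 1)) eta) as [|HD]; auto. exfalso.
  pose proof INR_N_ge_2. pose proof (ef_k_pos p Hp).
  set (k := ef_k p) in *. set (d := U 0) in *. set (D := Rpower d (p - 1)) in *.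
  assert (Hd0 : 0 < d) by (apply U_pos; lra).
  assert (HD0 : 0 < D) by apply Rpower_gt_0.
  assert (Hd2 : 2 < d)
    by (apply (Rpower_lt_reg_l 2 d (p - 1)); try lra; apply (Rmult_lt_reg_l lam); fold D; lra).
  assert (HDp : (p + 1) / 2 <= D) by (apply (Rmult_le_reg_l lam); lra).
  (* the radius where [lam r^2 U(0)^(p-1) = eta] *)
  set (r0 := sqrt (eta / (lam * D))).
  assert (Hq : 0 < eta / (lam * D)) by (apply Rdiv_lt_0_compat; nra).
  assert (Hr0 : 0 < r0) by (apply sqrt_lt_R0; lra).
  assert (Hr02 : lam * D * r0 ^ 2 = eta)
    by (unfold r0; rewrite <- Rsqr_pow2, Rsqr_sqrt by lra; field; nra).
  assert (Hr01 : r0 < 1).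
  { assert (r0 ^ 2 < 1) by (apply (Rmult_lt_reg_l (lam * D)); nra). nra. }
  assert (Hhalf : forall r, 0 <= r <= r0 -> d / 2 <= U r).
  { intros r Hr. eapply Rle_trans; [|apply U_ge_center; auto; lra]. fold d D.
    assert (lam * D * r ^ 2 <= lam * D * r0 ^ 2)
      by (apply Rmult_le_compat_l; [nra|apply pow_incr; lra]).
    assert (lam * D * r ^ 2 / (2 * INR N) <= 1 / 2)
      by (apply (Rmult_le_reg_r (2 * INR N)); [lra|]; field_simplify; lra).
    nra. }
  assert (HU1r0 : U1 r0 <= 0)
    by (apply U1_nonpos_of_ge_1; [lra|]; intros c Hc; pose proof (Hhalf c ltac:(lra)); lra).
  assert (HX : - (2 * k * U r0) <= r0 * U1 r0).
  { pose proof (U1_ge_center HDp r0 ltac:(lra)). fold d D in H1.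
    pose proof (Hhalf r0 ltac:(lra)).
    assert (lam * D * r0 ^ 2 / INR N <= k)
      by (rewrite Hr02; apply (Rmult_le_reg_r (INR N)); [lra|]; field_simplify; nra).
    nra. }
  assert (HP : ef_energy r0 <= - (k * ef_alpha N p / 16) * Rpower (eta / lam) k).
  { apply ef_energy_le_at; auto; try lra; fold d D.
    - rewrite <- Hr02. ring.
    - apply Hhalf. lra.
    - split; [exact HX|nra]. }
  assert (0 <= k * ef_alpha N p / 16) by (apply Rmult_le_pos; [apply Rmult_le_pos|]; lra).
  apply (U_not_gt_1_up_to_boundary r0); [lra|exact HU1r0|].
  apply U_gt_1_of_ef_energy; auto; lra.
Qed.

Definition pohozaev (A B r : R) : R :=
  r ^ N * (U1 r ^ 2 / 2 + lam * F p (U r)) + (INR N - 2) / 2 * r ^ (N - 1) * U r * U1 r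
  + lam * r ^ N * B / INR N - A * r ^ (N - 1) * U1 r.

Lemma pohozaev_derivable A B r : 0 <= r <= 1 -> exists l, derivable_pt_lim (pohozaev A B) r l.
Proof.
  intros Hr. pose proof (U_derivable r Hr). pose proof (U1_derivable r Hr).
  pose proof (U_pos r Hr).
  eexists. unfold pohozaev, F. derive; lra.
Qed.

Lemma pohozaev_deriv A B r : 0 < r < 1 ->
  derivable_pt_lim (pohozaev A B) r (- lam * r ^ (N - 1) *
    (U r ^ 2 + pohozaev_c N p * Rpower (U r) (p + 1) - A * f p (U r) - B)).
Proof.
  intros Hr. pose proof (U_derivable r ltac:(lra)). pose proof (U1_derivable r ltac:(lra)).
  pose proof (U_pos r ltac:(lra)). pose proof INR_N_ge_2.
  eapply derivable_pt_lim_value; [unfold pohozaev, F; derive; lra|].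
  cbv beta. rewrite U2_eq by lra. unfold f, pohozaev_c.
  replace (p + 1 - 1) with p by ring. rewrite (Rpower_succ (U r) p) by lra.
  rewrite (pow_pred_r r N) by lia. replace (pred N) with (N - 1)%nat by lia.
  rewrite minus_INR, (pow_pred_r r (N - 1)) by lia. simpl INR.
  field. lra.
Qed.

Lemma pohozaev_antimono A B :
  (forall c, 0 < c < 1 ->
     0 <= U c ^ 2 + pohozaev_c N p * Rpower (U c) (p + 1) - A * f p (U c) - B) ->
  pohozaev A B 1 <= pohozaev A B 0.
Proof.
  intros Hpsi.
  apply (deriv_nonpos_antimono (pohozaev A B) (fun c => - lam * c ^ (N - 1) *
    (U c ^ 2 + pohozaev_c N p * Rpower (U c) (p + 1) - A * f p (U c) - B))); try lra.
  - intros c Hc. destruct (pohozaev_derivable A B c Hc) as [l Hl].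
    exact (continuity_pt_of_derivable_pt_lim _ _ _ Hl).
  - intros c Hc. now apply pohozaev_deriv.
  - intros c Hc. specialize (Hpsi c Hc). assert (0 < c ^ (N - 1)) by (apply pow_lt; lra).
    assert (0 <= lam * c ^ (N - 1)) by (apply Rmult_le_pos; lra).
    assert (0 <= lam * c ^ (N - 1) *
      (U c ^ 2 + pohozaev_c N p * Rpower (U c) (p + 1) - A * f p (U c) - B))
      by (apply Rmult_le_pos; lra).
    lra.
Qed.

Lemma U_1_ge_m0 : (3 <= N)%nat -> p > p_S N ->
  (forall x y, 0 <= x -> x <= y -> y <= 1 -> U y <= U x) -> m0 N p <= U 1.
Proof.
  intros HN3 HpS Hanti.
  destruct (Rle_or_lt (m0 N p) (U 1)) as [|Hlt]; auto. exfalso.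
  pose proof INR_N_ge_2. set (m := U 1) in *.
  assert (Hm : 0 < m) by (apply U_pos; lra).
  set (A := INR N * m / 2). set (B := INR N * m ^ 2 / 2).
  assert (HK : pohozaev A B 1 <= pohozaev A B 0).
  { apply pohozaev_antimono. intros c Hc.
    apply pohozaev_integrand_nonneg; auto. apply Hanti; lra. }
  assert (HK0 : pohozaev A B 0 = 0)
    by (unfold pohozaev; rewrite U1_0, !pow_i by lia; lra).
  assert (HK1 : pohozaev A B 1 = lam * (Rpower m (p + 1) / (p + 1))).
  { unfold pohozaev, F. rewrite U1_1, !pow1. fold m. unfold B. field. lra. }
  pose proof (Rpower_gt_0 m (p + 1)).
  assert (0 < lam * (Rpower m (p + 1) / (p + 1)))
    by (apply Rmult_lt_0_compat; [lra|apply Rdiv_lt_0_compat; lra]).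
  lra.
Qed.

Lemma sin_between_0_1 x : 0 <= x <= PI -> 0 <= sin x <= 1.
Proof. intros. split; [apply sin_ge_0; lra|apply SIN_bound]. Qed.

Lemma sin_shift_between_0_1 w a c : 0 < w -> a <= c <= a + PI / w ->
  0 <= sin (w * (c - a)) <= 1.
Proof.
  intros Hw Hc. apply sin_between_0_1. split; [apply Rmult_le_pos; lra|].
  apply (Rmult_le_reg_l (/ w)); [apply Rinv_0_lt_compat; lra|].
  replace (/ w * (w * (c - a))) with (c - a) by (field; lra).
  replace (/ w * PI) with (PI / w) by (unfold Rdiv; ring). lra.
Qed.

Lemma sturm_inner_deriv_nonpos w a c phi : 0 < a < c -> c < 1 -> 0 <= phi <= 1 ->
  w * w = lam * (p - 1) -> U1 c <= 0 -> 1 <= U c ->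
  U2 c * phi + w * w * (U c - 1) * phi + (INR N - 1) / a * U1 c <= 0.
Proof.
  intros Hac Hc Hphi Hw2 HU1 HUc. pose proof INR_N_ge_2.
  rewrite U2_eq by lra.
  pose proof (f_ge_linear p Hp (U c) HUc).
  assert ((INR N - 1) / c * phi <= (INR N - 1) / a).
  { unfold Rdiv. rewrite Rmult_assoc. apply Rmult_le_compat_l; [lra|].
    assert (/ c <= / a) by (apply Rinv_le_contravar; lra).
    assert (0 < / c) by (apply Rinv_0_lt_compat; lra). nra. }
  assert (0 <= lam * phi * (f p (U c) - (p - 1) * (U c - 1)))
    by (apply Rmult_le_pos; [apply Rmult_le_pos|]; lra).
  assert (U1 c * ((INR N - 1) / a - (INR N - 1) / c * phi) <= 0)
    by (apply Rmult_nonpos_nonneg; lra).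
  replace ((- ((INR N - 1) / c * U1 c) - lam * f p (U c)) * phi
           + w * w * (U c - 1) * phi + (INR N - 1) / a * U1 c)
    with (U1 c * ((INR N - 1) / a - (INR N - 1) / c * phi)
          - lam * phi * (f p (U c) - (p - 1) * (U c - 1)))
    by (rewrite Hw2; field; lra).
  lra.
Qed.

Lemma sturm_outer_deriv_nonpos w kap c phi : 0 < c < 1 -> 0 <= phi <= 1 ->
  w * w = lam * kap -> U1 c <= 0 -> kap * (1 - U c) <= - f p (U c) ->
  - U2 c * phi + w * w * (1 - U c) * phi <= 0.
Proof.
  intros Hc Hphi Hw2 HU1 Hlin. pose proof INR_N_ge_2.
  rewrite U2_eq by lra.
  assert (U1 c * ((INR N - 1) / c * phi) <= 0)
    by (apply Rmult_nonpos_nonneg; [lra|apply Rmult_le_pos; [apply Rlt_le, Rdiv_lt_0_compat|]; lra]).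
  assert (0 <= lam * phi * (- f p (U c) - kap * (1 - U c)))
    by (apply Rmult_le_pos; [apply Rmult_le_pos|]; lra).
  replace (- (- ((INR N - 1) / c * U1 c) - lam * f p (U c)) * phi + w * w * (1 - U c) * phi)
    with (U1 c * ((INR N - 1) / c * phi) - lam * phi * (- f p (U c) - kap * (1 - U c)))
    by (rewrite Hw2; field; lra).
  lra.
Qed.

(* Sturm comparison of [U - 1] with [sin (w (r - a))] on [a, a + PI/w]: while
   [U >= 1] and [U' <= 0], [U - 1] oscillates at least as fast as the sine,
   which the monotonicity of the modified Wronskian [W] expresses. *)
Lemma U_le_1_after_sturm_interval w a :
  (forall x y, 0 <= x -> x <= y -> y <= 1 -> U y <= U x) ->
  0 < w -> w * w = lam * (p - 1) -> 0 < a -> (INR N - 1) / a < w -> a + PI / w <= 1 ->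
  U (a + PI / w) <= 1.
Proof.
  intros Hanti Hw Hw2 Ha Hsmall Hb. pose proof INR_N_ge_2. pose proof PI_RGT_0.
  set (b := a + PI / w) in *.
  assert (Hab : a < b) by (unfold b; assert (0 < PI / w) by (apply Rdiv_lt_0_compat; lra); lra).
  destruct (Rle_or_lt (U b) 1) as [|Hub]; [assumption|exfalso].
  set (W := fun r => U1 r * sin (w * (r - a)) - (U r - 1) * (w * cos (w * (r - a)))
                     + (INR N - 1) / a * (U r - 1)).
  set (W' := fun r => U2 r * sin (w * (r - a)) + w * w * (U r - 1) * sin (w * (r - a))
                      + (INR N - 1) / a * U1 r).
  assert (HW : forall c, a <= c <= b -> derivable_pt_lim W c (W' c)).
  { intros c Hc. pose proof (U_derivable c ltac:(lra)). pose proof (U1_derivable c ltac:(lra)).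
    unfold W, W'. eapply derivable_pt_lim_value; [derive|]. cbv beta. field. lra. }
  assert (Hmono : W b <= W a).
  { apply (deriv_nonpos_antimono W W'); try lra.
    - intros c Hc. exact (continuity_pt_of_derivable_pt_lim _ _ _ (HW c Hc)).
    - intros c Hc. apply HW. lra.
    - intros c Hc. unfold W'.
      apply (sturm_inner_deriv_nonpos w a c); try lra.
      + apply sin_shift_between_0_1; unfold b in *; lra.
      + apply (deriv_nonpos_of_antimono U 0 1 c); auto; [lra|apply U_derivable; lra].
      + assert (U b <= U c) by (apply Hanti; lra). lra. }
  unfold W in Hmono.
  replace (w * (b - a)) with PI in Hmono by (unfold b; field; lra).
  replace (w * (a - a)) with 0 in Hmono by ring.
  rewrite sin_PI, cos_PI, sin_0, cos_0 in Hmono.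
  assert (U b <= U a) by (apply Hanti; lra).
  assert (0 < (INR N - 1) / a) by (apply Rdiv_lt_0_compat; lra).
  assert (0 < (U a - 1) * (w - (INR N - 1) / a)) by (apply Rmult_lt_0_compat; lra).
  assert (0 <= (U b - 1) * (w + (INR N - 1) / a)) by (apply Rmult_le_pos; lra).
  lra.
Qed.

(* Where [- f(U) >= kap (1 - U)], Sturm comparison with [sin (w (r - c0))] rules
   out a nonnegative [1 - U] that is positive at [r = 1] with [U'(1) = 0]. *)
Lemma no_sturm_interval_below_1 w kap :
  (forall x y, 0 <= x -> x <= y -> y <= 1 -> U y <= U x) ->
  0 < kap -> 0 < w -> w * w = lam * kap -> 0 <= 1 - PI / w ->
  U (1 - PI / w) <= 1 -> U 1 < 1 ->
  (forall r, 1 - PI / w <= r <= 1 -> kap * (1 - U r) <= - f p (U r)) -> False.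
Proof.
  intros Hanti Hk Hw Hw2 Hc0 Hu0 Hu1 Hlin. pose proof INR_N_ge_2. pose proof PI_RGT_0.
  set (c0 := 1 - PI / w) in *.
  assert (Hc01 : c0 < 1) by (unfold c0; assert (0 < PI / w) by (apply Rdiv_lt_0_compat; lra); lra).
  set (V := fun r => - U1 r * sin (w * (r - c0)) - (1 - U r) * (w * cos (w * (r - c0)))).
  set (V' := fun r => - U2 r * sin (w * (r - c0)) + w * w * (1 - U r) * sin (w * (r - c0))).
  assert (HV : forall c, c0 <= c <= 1 -> derivable_pt_lim V c (V' c)).
  { intros c Hc. pose proof (U_derivable c ltac:(lra)). pose proof (U1_derivable c ltac:(lra)).
    unfold V, V'. eapply derivable_pt_lim_value; [derive|]. cbv beta. field. }
  assert (Hmono : V 1 <= V c0).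
  { apply (deriv_nonpos_antimono V V'); try lra.
    - intros c Hc. exact (continuity_pt_of_derivable_pt_lim _ _ _ (HV c Hc)).
    - intros c Hc. apply HV. lra.
    - intros c Hc. unfold V'.
      apply (sturm_outer_deriv_nonpos w kap c); try lra.
      + apply sin_shift_between_0_1; unfold c0 in *; lra.
      + apply (deriv_nonpos_of_antimono U 0 1 c); auto; [lra|apply U_derivable; lra].
      + apply Hlin. lra. }
  unfold V in Hmono.
  replace (w * (1 - c0)) with PI in Hmono by (unfold c0; field; lra).
  replace (w * (c0 - c0)) with 0 in Hmono by ring.
  rewrite sin_PI, cos_PI, sin_0, cos_0, U1_1 in Hmono.
  assert (0 < (1 - U 1) * w) by (apply Rmult_lt_0_compat; lra).
  assert (0 <= (1 - U c0) * w) by (apply Rmult_le_pos; lra).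
  lra.
Qed.

End RadialSolution.

(** * Small and large lambda *)

Definition small_eta (N : nat) (p : R) : R :=
  Rmin (Rmin (INR N) (INR N * ef_k p))
       (Rmin ((p + 1) * ef_k p * ef_alpha N p / 4) (INR N / (2 * p))).

Lemma small_eta_spec N p : (3 <= N)%nat -> p > p_S N ->
  0 < small_eta N p /\ small_eta N p <= INR N /\ small_eta N p <= INR N * ef_k p /\
  small_eta N p <= (p + 1) * ef_k p * ef_alpha N p / 4 /\ small_eta N p <= INR N / (2 * p).
Proof.
  intros HN HpS.
  pose proof (p_S_gt_1 N p HN HpS) as Hp. pose proof (INR_3_le N HN).
  pose proof (ef_alpha_pos N p HN HpS). pose proof (ef_k_pos p Hp).
  unfold small_eta.
  set (x2 := INR N * ef_k p). set (x3 := (p + 1) * ef_k p * ef_alpha N p / 4).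
  set (x4 := INR N / (2 * p)).
  assert (0 < x2 /\ 0 < x3 /\ 0 < x4) as (Hx2 & Hx3 & Hx4)
    by (unfold x2, x3, x4;
        repeat split; repeat (apply Rdiv_lt_0_compat || apply Rmult_lt_0_compat); lra).
  pose proof (Rmin_l (Rmin (INR N) x2) (Rmin x3 x4)).
  pose proof (Rmin_r (Rmin (INR N) x2) (Rmin x3 x4)).
  pose proof (Rmin_l (INR N) x2). pose proof (Rmin_r (INR N) x2).
  pose proof (Rmin_l x3 x4). pose proof (Rmin_r x3 x4).
  split; [repeat apply Rmin_pos; lra|]. repeat split; lra.
Qed.

Lemma lambda_Rmax_lt N p lam D eta : 0 < p -> 0 < lam -> 0 < D ->
  lam * D <= eta -> p * eta <= INR N / 2 -> lam * (1 + p * ((p + 1) / 2)) < INR N / 2 ->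
  lam * (1 + p * Rmax D ((p + 1) / 2)) < INR N.
Proof.
  intros Hp Hl HD HDe Hpe Hlq.
  pose proof (Rmax_le_plus D ((p + 1) / 2) ltac:(lra) ltac:(lra)).
  assert (lam * Rmax D ((p + 1) / 2) <= lam * D + lam * ((p + 1) / 2))
    by (rewrite <- Rmult_plus_distr_l; apply Rmult_le_compat_l; lra).
  nra.
Qed.

Lemma no_nonconstant_solution_small_lambda N p : (3 <= N)%nat -> p > p_S N ->
  exists lam_low : R, lam_low > 0 /\
    forall lam U, 0 < lam < lam_low -> regular_solution N p lam U -> ~ nonconstant_01 U.
Proof.
  intros HN HpS.
  pose proof (p_S_gt_1 N p HN HpS) as Hp. pose proof (INR_3_le N HN).
  pose proof (ef_alpha_pos N p HN HpS) as Ha. pose proof (ef_k_pos p Hp) as Hk.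
  destruct (small_eta_spec N p HN HpS) as (Heta & HeN & HeNk & Heka & Hep).
  set (eta := small_eta N p) in *. set (k := ef_k p) in *. set (a := ef_alpha N p) in *.
  assert (Hbeta : 0 <= ef_beta N p)
    by (rewrite ef_beta_eq; fold k a; assert (0 <= k * a) by nra; nra).
  (* chosen so that [k a / 16 * C = (beta + 1) / 2] *)
  set (C := 8 * (ef_beta N p + 1) / (k * a)).
  assert (HC : 0 < C) by (apply Rdiv_lt_0_compat; nra).
  set (q := 1 + p * ((p + 1) / 2)).
  assert (Hq : 0 < q) by (unfold q; nra).
  pose proof (Rpower_gt_0 2 (p - 1)). pose proof (Rpower_gt_0 C (/ k)).
  exists (Rmin (Rmin 1 (eta / Rpower 2 (p - 1)))
           (Rmin (Rmin (eta / ((p + 1) / 2)) (INR N / 2 / q)) (eta / Rpower C (/ k)))).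
  split.
  { apply Rlt_gt. repeat apply Rmin_pos; repeat apply Rdiv_lt_0_compat; lra. }
  intros lam U [Hlam Hlt] (U1 & U2 & Hsol) Hnc.
  rewrite !Rlt_Rmin in Hlt. destruct Hlt as [[Hl1 Hl2] [[Hl3 Hl4] Hl5]].
  apply Rlt_div_mul in Hl2, Hl3, Hl4; try lra.
  assert (HCk : C < Rpower (eta / lam) k).
  { apply Rpower_gt_of_root_lt; auto.
    apply Rlt_div_mul in Hl5; [|lra].
    apply (Rmult_lt_reg_r lam); [lra|].
    replace (eta / lam * lam) with eta by (field; lra). lra. }
  assert (Hcenter : lam * Rpower (U 0) (p - 1) <= eta).
  { apply (center_value_bound N p lam U U1 U2); fold k a; try lia; try lra; auto.
    replace ((ef_beta N p + 1) / 2) with (k * a / 16 * C) by (unfold C; field; nra).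
    apply Rmult_lt_compat_l; [nra|exact HCk]. }
  pose proof (nonconstant_lambda_lower_bound N p lam U U1 U2 ltac:(lia) Hp Hlam Hsol Hnc).
  assert (p * eta <= INR N / 2)
    by (apply (Rmult_le_compat_l p) in Hep; [|lra];
        replace (p * (INR N / (2 * p))) with (INR N / 2) in Hep by (field; lra); lra).
  pose proof (lambda_Rmax_lt N p lam (Rpower (U 0) (p - 1)) eta ltac:(lra) Hlam
                (Rpower_gt_0 _ _) Hcenter ltac:(assumption) Hl4).
  lra.
Qed.

Lemma sturm_intervals_fit n w1 w2 : 2 <= n -> 2 * (n + PI) < w1 -> 2 * PI < w2 ->
  0 < n / w1 /\ n / w1 + PI / w1 < 1 / 2 /\ 1 / 2 < 1 - PI / w2 /\ (n - 1) / (n / w1) < w1.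
Proof.
  intros Hn Hw1 Hw2. pose proof PI_RGT_0.
  split; [apply Rdiv_lt_0_compat; lra|]. split; [|split].
  - replace (n / w1 + PI / w1) with ((n + PI) / w1) by (field; lra).
    apply (Rmult_lt_reg_r w1); [lra|]. field_simplify; lra.
  - assert (PI / w2 < 1 / 2) by (apply (Rmult_lt_reg_r w2); [lra|]; field_simplify; lra).
    lra.
  - replace ((n - 1) / (n / w1)) with ((n - 1) * w1 / n) by (field; lra).
    apply (Rmult_lt_reg_r n); [lra|]. field_simplify; nra.
Qed.

Lemma no_decreasing_solution_large_lambda N p : (3 <= N)%nat -> p > p_S N ->
  exists lam_bar : R, lam_bar > 0 /\
    forall lam U, lam > lam_bar -> regular_solution N p lam U -> ~ radially_decreasing U.
Proof.
  intros HN HpS.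
  pose proof (p_S_gt_1 N p HN HpS) as Hp. pose proof (INR_3_le N HN).
  pose proof (m0_pos N p HN HpS). pose proof PI_RGT_0.
  set (kap := m0 N p * Rmin 1 (p - 1)).
  assert (Hkap : 0 < kap) by (apply Rmult_lt_0_compat; [lra|apply Rmin_pos; lra]).
  assert (Q1 : 0 <= 4 * (INR N + PI) ^ 2 / (p - 1))
    by (apply Rlt_le, Rdiv_lt_0_compat; [nra|lra]).
  assert (Q2 : 0 <= 4 * PI ^ 2 / kap) by (apply Rlt_le, Rdiv_lt_0_compat; nra).
  exists (4 * (INR N + PI) ^ 2 / (p - 1) + 4 * PI ^ 2 / kap + 1).
  split; [lra|].
  intros lam U Hlam (U1 & U2 & Hsol) [Hanti Hnc].
  assert (Hl : 0 < lam) by lra.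
  set (w1 := sqrt (lam * (p - 1))). set (w2 := sqrt (lam * kap)).
  assert (Hw1 : w1 * w1 = lam * (p - 1)) by (apply sqrt_sqrt; nra).
  assert (Hw2 : w2 * w2 = lam * kap) by (apply sqrt_sqrt; nra).
  assert (Hw1b : 2 * (INR N + PI) < w1) by (apply two_mul_lt_sqrt; lra).
  assert (Hw2b : 2 * PI < w2) by (apply two_mul_lt_sqrt; lra).
  destruct (sturm_intervals_fit (INR N) w1 w2) as (Ha & Hb & Hc0 & Hsmall); try lra.
  assert (0 < PI / w1) by (apply Rdiv_lt_0_compat; lra).
  assert (0 < PI / w2) by (apply Rdiv_lt_0_compat; lra).
  set (a := INR N / w1) in *.
  assert (HR1 : U (a + PI / w1) <= 1)
    by (apply (U_le_1_after_sturm_interval N p lam U U1 U2); auto; try lia; lra).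
  assert (Hm : m0 N p <= U 1) by (apply (U_1_ge_m0 N p lam U U1 U2); auto; lia).
  assert (Hu1 : U 1 < 1).
  { destruct (nonconstant_straddles_1 N p lam U U1 U2 ltac:(lia) Hp Hl Hsol Hnc)
      as [(x & Hx & Hux) _].
    assert (U 1 <= U x) by (apply Hanti; lra). lra. }
  assert (U (1 - PI / w2) <= U (a + PI / w1)) by (apply Hanti; lra).
  apply (no_sturm_interval_below_1 N p lam U U1 U2) with (w := w2) (kap := kap);
    auto; try lia; try lra.
  intros r Hr.
  assert (U 1 <= U r) by (apply Hanti; lra).
  assert (U r <= U (1 - PI / w2)) by (apply Hanti; lra).
  apply f_le_linear; auto; lra.
Qed.

Theorem corollary1 (N : nat) (p : R) (HN : (3 <= N)%nat) (Hp : p > p_S N) :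
  (exists lam_low : R, lam_low > 0 /\
     forall lam U, 0 < lam < lam_low ->
       regular_solution N p lam U -> ~ nonconstant_01 U) /\
  (exists lam_bar : R, lam_bar > 0 /\
     forall lam U, lam > lam_bar ->
       regular_solution N p lam U -> ~ radially_decreasing U).
Proof.
  split.
  - exact (no_nonconstant_solution_small_lambda N p HN Hp).
  - exact (no_decreasing_solution_large_lambda N p HN Hp).
Qed.
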